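(* For every $i$ with $0\le i\le\rho(m)-1$ and every integer $t$ with $1\le t\le p_i-1$, we have $x^{\alpha_i}(k+t)=0$.
   Context: For $u\in\mathbb{R}$ let $\mathbf 1[u]=1$ if $u\ge 0$ and $\mathbf 1[u]=0$ if $u<0$. Let $m$ be a positive integer and let $\rho(m)$ denote the number of primes $p$ with $2m<p<3m$; assume $\rho(m)\ge 2$. List these primes as $p_0>p_1>\dots>p_{\rho(m)-1}$ and put $\alpha_i=3m-p_i$. Let $k=(6m-1)\rho(m)$, $\mu_i=\lfloor k/p_i\rfloor$, $\beta_i=k-p_i\mu_i$. Define weights $\bar a_j$, $1\le j\le k$: if $\rho(m)$ is even, $\bar a_j=2$ if $j=\ell p_i$ for some $i$ and some $\ell$ with $1\le \ell\le 3\rho(m)/2$, $\bar a_j=-2$ if $j=\ell p_i$ with $3\rho(m)/2<\ell\le 2\rho(m)$, and $\bar a_j=0$ otherwise; if $\rho(m)$ is odd, $\bar a_j=2$ if $j=\ell p_i$ with $1\le\ell\le (3\rho(m)-1)/2$, $\bar a_j=-2$ if $j=\ell p_i$ with $(3\rho(m)+1)/2\le \ell\le 2\rho(m)-2$, $\bar a_j=-1$ if $j=\ell p_i$ with $\ell\in\{2\rho(m)-1,2\rho(m)\}$, and $\bar a_j=0$ otherwise (well defined since the sets $\{\ell p_i:1\le\ell\le2\rho(m)\}$ are pairwise disjoint). Let $\bar\theta=2\rho(m)$. For each $i$ define $x^{\alpha_i}(t)$ for $0\le t\le k-1$ by $x^{\alpha_i}(t)=1$ if $t=\beta_i+\ell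 p_i$ for some $0\le \ell\le\mu_i-1$ and $x^{\alpha_i}(t)=0$ otherwise, and for $t\ge k$ by $x^{\alpha_i}(t)=\mathbf 1\big[\sum_{j=1}^k \bar a_j x^{\alpha_i}(t-j)-\bar\theta\big]$. *)

From mathcomp Require Import all_boot all_order all_algebra.
Set Implicit Arguments. Unset Strict Implicit. Unset Printing Implicit Defensive.
Import Order.TTheory GRing.Theory Num.Theory.

(* The primes p with 2m < p < 3m, listed in DECREASING order p_0 > p_1 > ... *)
Definition primes_dec (m : nat) : seq nat :=
  rev [seq p <- iota (2 * m).+1 (3 * m - (2 * m).+1) | prime p].

Definition rho (m : nat) : nat := size (primes_dec m).

Definition pr (m i : nat) : nat := nth 0 (primes_dec m) i.

Definition alpha (m i : nat) : nat := 3 * m - pr m i.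

Definition kk (m : nat) : nat := (6 * m - 1) * rho m.

Definition mu (m i : nat) : nat := kk m %/ pr m i.
Definition beta (m i : nat) : nat := kk m - pr m i * mu m i.

(* weight of the multiple l * p_i (1 <= l <= 2 rho), depending on parity of rho *)
Definition wgt (r l : nat) : int :=
  if ~~ odd r then
    (if l <= (3 * r) %/ 2 then Posz 2 else (- 2)%R)
  else
    (if l <= (3 * r - 1) %/ 2 then Posz 2
     else if l <= 2 * r - 2 then (- 2)%R
     else (- 1)%R).

(* \bar a_j : if j = l p_i for some i and 1 <= l <= 2 rho(m), the weight of l
   (the i is unique since the sets {l p_i} are pairwise disjoint); else 0. *)
Definition abar (m j : nat) : int :=
  let P := primes_dec m in
  let ok := fun p => (p %| j) && (0 < j %/ p <= 2 * rho m) in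
  if has ok P then wgt (rho m) (j %/ nth 0 P (find ok P)) else 0%R.

Definition theta (m : nat) : int := Posz (2 * rho m).

Definition ind (u : int) : int := if (0 <= u)%R then 1%R else 0%R.

(* Generic threshold recursion of order k with weights a, threshold th, and
   initial values init t for 0 <= t <= k-1:
   x(t) = 1[ sum_{j=1}^k a_j x(t-j) - th ] for t >= k.
   hist n is the list [x(0); ...; x(n-1)]. *)
Fixpoint hist (k : nat) (a : nat -> int) (th : int) (init : nat -> int)
  (n : nat) : seq int :=
  match n with
  | 0 => [::]
  | n'.+1 =>
      let h := hist k a th init n' in
      rcons h (if n' < k then init n'
               else ind ((\sum_(1 <= j < k.+1) a j * nth 0%R h (n' - j)) - th)%R)
  end.

Definition xseq (k : nat) (a : nat -> int) (th : int) (init : nat -> int)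
  (t : nat) : int := nth 0%R (hist k a th init t.+1) t.

Definition init_alpha (m i t : nat) : int :=
  if has (fun l => t == beta m i + l * pr m i) (iota 0 (mu m i)) then 1%R else 0%R.

Definition x_alpha (m i t : nat) : int :=
  xseq (kk m) (abar m) (theta m) (init_alpha m i) t.

From mathcomp Require Import all_boot all_order all_algebra.
From mathcomp Require Import zify.
Import Order.TTheory GRing.Theory Num.Theory.
Set Implicit Arguments. Unset Strict Implicit.

(* Fix i, write p = p_i and x = x^{alpha_i}.  We show x(k+s) = 0 for
   1 <= s <= p-1 by strong induction on s.  All values of x are 0 or 1, and
   every 1 among x(0), ..., x(k+s-1) sits at an index congruent to k or to
   k+s modulo p: the initial segment is supported on beta_i + p N, and
   beta_i = k mod p, while x(k+1), ..., x(k+s-1) vanish by induction and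
   x(k) is at the index k+s-s.  Hence the weighted sum defining x(k+s) only
   sees weights \bar a_j with j = s (mod p), each at most 2.  A nonzero weight
   at such a j is a multiple j = l q of some prime q in (2m, 3m) with
   l <= 2 rho(m); here q <> p since p does not divide j, and two such j
   sharing the same q coincide because p q > 2 rho(m) q bounds both.  So at
   most rho(m) - 1 weights contribute and the sum is at most
   2 (rho(m) - 1) < 2 rho(m) = \bar theta, which forces x(k+s) = 0.
   The file first treats the threshold recursion in general, then the primes
   in (2m, 3m) and the weights \bar a_j, then the counting argument. *)

Section ThresholdRecursion.
Variables (k : nat) (a : nat -> int) (th : int) (init : nat -> int).

Lemma size_hist n : size (hist k a th init n) = n.
Proof. by elim: n => //= n IH; rewrite size_rcons IH. Qed.

Lemma nth_hist n t : t < n -> nth 0%R (hist k a th init n) t = xseq k a th init t.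
Proof.
elim: n => // n IH ltn.
rewrite [hist _ _ _ _ n.+1]/= nth_rcons size_hist.
case: ltnP => [/IH // | len].
have -> : t = n by apply/eqP; rewrite eqn_leq len -ltnS ltn.
by rewrite eqxx /xseq /= nth_rcons size_hist ltnn eqxx.
Qed.

Lemma xseqE n : xseq k a th init n =
  if n < k then init n else
  ind ((\sum_(1 <= j < k.+1) a j * xseq k a th init (n - j)) - th)%R.
Proof.
rewrite /xseq /= nth_rcons size_hist ltnn eqxx; case: ltnP => // hk.
congr (ind (_ - _)%R); apply: eq_big_nat => j /andP[j1 j2].
by rewrite nth_hist //; lia.
Qed.

Lemma xseq_01 n : (forall t, init t = 0%R \/ init t = 1%R) ->
  xseq k a th init n = 0%R \/ xseq k a th init n = 1%R.
Proof.
move=> init01; rewrite xseqE; case: ltnP => _ //.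
by rewrite /ind; case: ifP; auto.
Qed.

End ThresholdRecursion.

Lemma mem_primes_dec m q : 0 < m ->
  (q \in primes_dec m) = prime q && (2 * m < q < 3 * m).
Proof.
move=> hm; rewrite /primes_dec mem_rev mem_filter mem_iota; congr (_ && _).
by apply/idP/idP => /andP[h1 h2]; apply/andP; split; lia.
Qed.

Lemma uniq_primes_dec m : uniq (primes_dec m).
Proof. by rewrite /primes_dec rev_uniq filter_uniq // iota_uniq. Qed.

(* There are at most m - 1 candidates in (2m, 3m); hence 2 rho(m) < 2m. *)
Lemma rho_le m : rho m <= m - 1.
Proof.
rewrite /rho /primes_dec size_rev size_filter.
apply: (leq_trans (count_size _ _)); rewrite size_iota; lia.
Qed.

Definition multiple_in_range m j q := (q %| j) && (0 < j %/ q <= 2 * rho m).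

Definition base_prime m j :=
  nth 0 (primes_dec m) (find (multiple_in_range m j) (primes_dec m)).

Lemma abarE m j : abar m j =
  if has (multiple_in_range m j) (primes_dec m)
  then wgt (rho m) (j %/ base_prime m j) else 0%R.
Proof. by []. Qed.

Lemma abar_le2 m j : (abar m j <= 2)%R.
Proof.
rewrite abarE; case: has => //; rewrite /wgt.
by case: odd => /=; repeat case: ifP.
Qed.

Lemma base_primeP m j : has (multiple_in_range m j) (primes_dec m) ->
  base_prime m j \in primes_dec m /\ multiple_in_range m j (base_prime m j).
Proof.
by move=> h; split; [rewrite /base_prime mem_nth // -has_find | exact: nth_find].
Qed.

(* Two multiples of q, both at most c q with c < p, that agree modulo a
   prime p coprime to q, are equal: their difference is a multiple of p q. *)
Lemma eq_multiples_mod p q c j1 j2 : 0 < q -> coprime p q -> c < p ->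
  q %| j1 -> q %| j2 -> j1 <= c * q -> j2 <= c * q ->
  j1 = j2 %[mod p] -> j1 = j2.
Proof.
move=> q0 cop cp.
wlog le12 : j1 j2 / j1 <= j2 => [hwlog|].
  case: (leqP j1 j2) => [le | /ltnW le] d1 d2 b1 b2 e; first exact: hwlog.
  by apply/esym/hwlog.
move=> d1 d2 _ b2 e.
have dpq : p * q %| j2 - j1.
  by rewrite Gauss_dvd // (dvdn_sub d2 d1) andbT -eqn_mod_dvd // e.
have lt_pq : c * q < p * q by rewrite ltn_mul2r q0 cp.
case: (posnP (j2 - j1)) => [z | pos]; first lia.
have := dvdn_leq pos dpq; lia.
Qed.

(* Among distinct indices j in a residue class s /= 0 modulo p = p_i with
   \bar a_j supported, the base primes are distinct and differ from p. *)
Lemma count_supported_residue m p s (js : seq nat) : 0 < m ->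
  p \in primes_dec m -> s %% p != 0 -> uniq js ->
  count (fun j => (j %% p == s %% p) && has (multiple_in_range m j) (primes_dec m)) js
  <= rho m - 1.
Proof.
move=> hm pin s0 ujs.
have [pp /andP[p2 _]] : prime p /\ (2 * m < p < 3 * m).
  by move: pin; rewrite mem_primes_dec // => /andP[].
have lt_rho_p : 2 * rho m < p by have := rho_le m; lia.
have base_ne_p j : j %% p = s %% p -> has (multiple_in_range m j) (primes_dec m) ->
    base_prime m j != p.
  move=> ej /base_primeP[_ /andP[d _]]; apply: contraNneq s0 => eqp.
  by rewrite -ej -eqp.
rewrite -size_filter -(size_map (base_prime m)).
have -> : rho m - 1 = size (rem p (primes_dec m)) by rewrite size_rem // subn1.
apply: uniq_leq_size.
  rewrite map_inj_in_uniq ?filter_uniq // => j1 j2.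
  rewrite !mem_filter => /andP[/andP[/eqP e1 h1] _] /andP[/andP[/eqP e2 h2] _] eb.
  have [q1 /andP[d1 /andP[_ l1]]] := base_primeP h1.
  have [_ /andP[d2 /andP[_ l2]]] := base_primeP h2.
  move: q1; rewrite mem_primes_dec // => /andP[qp _].
  have cop : coprime p (base_prime m j1).
    by rewrite prime_coprime // dvdn_prime2 // eq_sym base_ne_p.
  rewrite -eb in d2 l2.
  apply: (eq_multiples_mod (prime_gt0 qp) cop lt_rho_p d1 d2); last by rewrite e1 e2.
    by rewrite -{1}(divnK d1) leq_mul2r l1 orbT.
  by rewrite -{1}(divnK d2) leq_mul2r l2 orbT.
move=> q /mapP[j]; rewrite mem_filter => /andP[/andP[/eqP ej hj] _] ->.
have [qin _] := base_primeP hj.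
by rewrite (mem_rem_uniq _ (uniq_primes_dec m)) inE qin andbT base_ne_p.
Qed.

Lemma sum_count2 (js : seq nat) (P : pred nat) :
  (\sum_(j <- js) (if P j then 2 else 0 : int))%R = Posz (2 * count P js).
Proof.
elim: js => [|j js IH]; first by rewrite big_nil.
by rewrite big_cons IH /=; case: (P j) => /=; lia.
Qed.

Lemma x_alpha_01 m i n : x_alpha m i n = 0%R \/ x_alpha m i n = 1%R.
Proof.
by apply: xseq_01 => t; rewrite /init_alpha; case: ifP; auto.
Qed.

Lemma init_alpha_mod m i n : init_alpha m i n = 1%R -> n = kk m %[mod pr m i].
Proof.
rewrite /init_alpha; case: ifP => [/hasP[l _ /eqP ->] _ | _ //].
have -> : beta m i = kk m %% pr m i.
  by rewrite /beta /mu; have := divn_eq (kk m) (pr m i); lia.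
by rewrite addnC modnMDl modn_mod.
Qed.

Lemma ind_below_threshold (S : int) r : 1 <= r ->
  (S <= Posz (2 * (r - 1)))%R -> ind (S - Posz (2 * r)) = 0%R.
Proof. by move=> r1 le; rewrite /ind; case: ifP => //; lia. Qed.

Section AfterInitialSegment.
Variables (m i : nat).
Hypotheses (hm : 0 < m) (hi : i < rho m).

Let p := pr m i.
Let k := kk m.

Lemma pr_mem : p \in primes_dec m.
Proof. exact: mem_nth. Qed.

Lemma one_lag_mod s : (forall s', 1 <= s' < s -> x_alpha m i (k + s') = 0%R) ->
  forall j, 1 <= j <= k -> x_alpha m i (k + s - j) = 1%R -> j = s %[mod p].
Proof.
move=> IH j /andP[j1 jk] x1.
case: (ltngtP (k + s - j) k) => c.
- move: x1; rewrite /x_alpha xseqE c => /init_alpha_mod; rewrite -/p -/k => ekp.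
  apply/eqP; rewrite -(eqn_modDl k).
  have -> : k + s = k + s - j + j by lia.
  by rewrite -(modnDml (k + s - j)) ekp modnDml.
- have e : k + s - j = k + (k + s - j - k) by lia.
  by move: x1; rewrite e IH //; lia.
- by congr (_ %% _); lia.
Qed.

Lemma weighted_sum_bound s : s %% p != 0 ->
  (forall s', 1 <= s' < s -> x_alpha m i (k + s') = 0%R) ->
  (\sum_(1 <= j < k.+1) abar m j * x_alpha m i (k + s - j)
     <= Posz (2 * (rho m - 1)))%R.
Proof.
move=> s0 IH.
set Q := fun j => (j %% p == s %% p) && has (multiple_in_range m j) (primes_dec m).
have term j : 1 <= j < k.+1 ->
    (abar m j * x_alpha m i (k + s - j) <= if Q j then 2 else 0)%R.
  move=> hj; case: (x_alpha_01 m i (k + s - j)) => x1; rewrite x1.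
    by rewrite mulr0; case: (Q j).
  rewrite mulr1 /Q; case hh: has; last by rewrite abarE hh andbF.
  have hj' : 1 <= j <= k by lia.
  by rewrite (one_lag_mod IH hj' x1) eqxx abar_le2.
apply: (le_trans (ler_sum_nat term)).
rewrite sum_count2 lez_nat leq_mul2l /=.
exact: count_supported_residue hm pr_mem s0 (iota_uniq _ _).
Qed.

Lemma x_alpha_after_k s : 1 <= s <= p - 1 -> x_alpha m i (k + s) = 0%R.
Proof.
elim/ltn_ind: s => s IH /andP[s1 sp].
have s0 : s %% p != 0 by rewrite modn_small; lia.
have sum_le : (\sum_(1 <= j < k.+1) abar m j * x_alpha m i (k + s - j)
                 <= Posz (2 * (rho m - 1)))%R.
  by apply: weighted_sum_bound s0 _ => s' /andP[s'1 s's]; apply: IH; lia.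
rewrite /x_alpha xseqE ltnNge leq_addr /=.
apply: ind_below_threshold sum_le; lia.
Qed.

End AfterInitialSegment.

Theorem lemma6 (m : nat) (hm : 0 < m) (hrho : 2 <= rho m) :
  forall i t : nat, i <= rho m - 1 -> 1 <= t <= pr m i - 1 ->
    x_alpha m i (kk m + t) = 0%R.
Proof.
move=> i t hi ht.
apply: x_alpha_after_k => //; lia.
Qed.
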